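(* Let $n>s\ge1$ be integers and ${\bm v}=(v_0,\dots,v_s)\in\mathbb{R}^{s+1}$. Let $f_{\bm v}(t;x)=x^n+t\sum_{k=0}^sv_kx^k$, $P_{\bm v}(t)=\det M_n(f_{\bm v}(t;x),f'_{\bm v}(t;x))\in\mathbb{R}[t]$ (derivative in $x$), assumed not identically zero, and $\alpha_{\bm v}=\max\{\alpha\in\mathbb{R}\mid P_{\bm v}(\alpha)=0\}$. Suppose there exist an integer $\gamma_0$ and a real $\rho_0>\alpha_{\bm v}$ such that $N_{f_{\bm v}(\xi;x)}=\gamma_0$ for all $\xi>\rho_0$. Then $N_{f_{\bm v}(\xi;x)}=\gamma_0$ for all $\xi>\alpha_{\bm v}$.
   Context: Bezoutian: for polynomials $f_1,f_2$ over a field $F$ of characteristic $0$ and an integer $n\ge\max\{\deg f_1,\deg f_2\}$, write $\frac{f_1(x)f_2(y)-f_1(y)f_2(x)}{x-y}=\sum_{i,j=1}^n\alpha_{ij}x^{n-i}y^{n-j}\in F[x,y]$ and set $M_n(f_1,f_2)=(\alpha_{ij})_{1\le i,j\le n}$. $N_h$ is the number of distinct real roots of a real polynomial $h$. Note $P_{\bm v}(0)=0$ since $f_{\bm v}(0;x)=x^n$. *)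

From HB Require Import structures.
From mathcomp Require Import all_boot all_order all_algebra.
Set Implicit Arguments. Unset Strict Implicit. Unset Printing Implicit Defensive.
Import Order.TTheory GRing.Theory Num.Theory.
Local Open Scope ring_scope.

(* The bivariate polynomial (f1(x) f2(y) - f1(y) f2(x)) / (x - y), represented in
   {poly {poly A}}: the outer variable is x, the inner variable is y.
   The division is exact (divisor monic in x). *)
Definition bezout_poly (A : idomainType) (f1 f2 : {poly A}) : {poly {poly A}} :=
  (map_poly polyC f1 * f2%:P - f1%:P * map_poly polyC f2) %/ ('X - ('X)%:P).

(* M_n(f1,f2) = (alpha_ij)_{1<=i,j<=n}, where alpha_ij is the coefficient of
   x^(n-i) y^(n-j).  Ordinal i : 'I_n stands for index i+1. *)
Definition bezout_mx (A : idomainType) (n : nat) (f1 f2 : {poly A}) : 'M[A]_n :=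
  \matrix_(i < n, j < n) ((bezout_poly f1 f2)`_(n - i.+1))`_(n - j.+1).

(* f_v(t;x) = x^n + t * sum_{k=0}^s v_k x^k, as a polynomial in x whose
   coefficients are polynomials in t. *)
Definition fv (R : rcfType) (n s : nat) (v : 'I_s.+1 -> R) : {poly {poly R}} :=
  'X^n + \sum_(k < s.+1) ((v k)%:P * 'X)%:P * 'X^k.

Definition fv_at (R : rcfType) (n s : nat) (v : 'I_s.+1 -> R) (xi : R) : {poly R} :=
  map_poly (fun p : {poly R} => p.[xi]) (fv n v).

Definition Pv (R : rcfType) (n s : nat) (v : 'I_s.+1 -> R) : {poly R} :=
  \det (bezout_mx n (fv n v) (fv n v)^`()).

Definition num_real_roots_eq (R : rcfType) (h : {poly R}) (m : nat) : Prop :=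
  exists r : seq R, [/\ uniq r, (forall x, root h x = (x \in r)) & size r = m].

From HB Require Import structures.
From mathcomp Require Import all_boot all_order all_algebra.
From mathcomp Require Import polyorder polyrcf.
From mathcomp Require Import ring lra zify.
Import Order.TTheory GRing.Theory Num.Theory.
Set Implicit Arguments. Unset Strict Implicit. Unset Printing Implicit Defensive.
Local Open Scope ring_scope.
Local Notation noroot p := (forall x, ~~ root p x).

(* For [t > alpha] every real root of [f_t = 'X^n + t q] is simple, since a
   common root of [f_t] and [f_t'] makes the Bezoutian singular, i.e.
   [P_v(t) = 0].  Write [q = 'X^m q1] with [q1(0) != 0], so
   that [f_t = 'X^m ('X^k + t q1)].  The real roots of the pencil ['X^k + t q1]
   are the solutions of [- 'X^k / q1 = t]; this function is monotone between
   consecutive zeros of [q1] and of the Wronskian of [q1] and ['X^k], and at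
   those zeros the sign of the pencil is the same for all [t > alpha], because a
   zero of the Wronskian is a double root of the pencil for a single parameter,
   which is [<= alpha].  Hence each root for a parameter [t > alpha] can be
   followed, without crossing such a zero, to a unique root for any other
   parameter [t' > alpha], and the number of real roots is constant there. *)

Lemma leq_size_rel (T : eqType) (rel : T -> T -> Prop) (s1 s2 : seq T) :
  uniq s1 -> uniq s2 ->
  (forall x, x \in s1 -> exists2 y, y \in s2 & rel x y) ->
  (forall x1 x2 y, x1 \in s1 -> x2 \in s1 -> rel x1 y -> rel x2 y -> x1 = x2) ->
  (size s1 <= size s2)%N.
Proof.
elim: s1 s2 => [//|x s1 IH] s2 /= /andP[xNs1 us1] us2 img inj.
have [y ys2 rxy] := img x (mem_head _ _).
have -> : size s2 = (size (rem y s2)).+1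
  by rewrite (size_rem ys2) prednK //; case: (s2) ys2.
apply: IH => //; first exact: rem_uniq.
- move=> x' x's1; have x'_in : x' \in x :: s1 by rewrite inE x's1 orbT.
  have [y' y's2 rxy'] := img x' x'_in.
  exists y' => //; rewrite (mem_rem_uniq _ us2) inE y's2 andbT.
  apply: contraNneq xNs1 => y'y; rewrite -y'y in rxy.
  by rewrite (inj x x' y') ?mem_head.
- by move=> x1 x2 y' h1 h2; apply: inj; rewrite inE ?h1 ?h2 orbT.
Qed.

Section RealRootCount.
Variable R : rcfType.
Implicit Types p : {poly R}.

Lemma num_real_roots_eq_rootsR p : p != 0 -> num_real_roots_eq p (size (rootsR p)).
Proof.
move=> p0; exists (rootsR p); split=> //; first exact: uniq_roots.
by move=> x; rewrite -(roots_on_rootsR p0) in_itv.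
Qed.

Lemma num_real_roots_eq_inj p k1 k2 :
  num_real_roots_eq p k1 -> num_real_roots_eq p k2 -> k1 = k2.
Proof.
move=> [r1 [u1 e1 <-]] [r2 [u2 e2 <-]].
by apply/perm_size/uniq_perm => // x; rewrite -e1 -e2.
Qed.

Lemma root_Xn n x : (0 < n)%N -> root ('X^n : {poly R}) x = (x == 0).
Proof. by move=> n0; rewrite rootE hornerXn expf_eq0 n0. Qed.

Lemma num_real_roots_eq_mulXn p m k : ~~ root p 0 ->
  num_real_roots_eq p k -> num_real_roots_eq ('X^m * p) ((0 < m) + k).
Proof.
move=> p0 [r [ur er <-]]; case: m => [|m].
  by exists r; rewrite expr0 mul1r.
exists (0 :: r); split=> //=; first by rewrite -er p0.
by move=> x; rewrite rootM root_Xn // er inE.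
Qed.

End RealRootCount.

Section SimpleRootSigns.
Variable R : rcfType.
Implicit Types p : {poly R}.

Lemma sgr_right_of_simple_root p x w : x < w -> root p x -> p^`().[x] != 0 ->
  {in `]x, w], noroot p} -> Num.sg p.[w] = Num.sg p^`().[x].
Proof.
move=> xw px p'x nr.
have p0 : p != 0 by apply: contraNneq p'x => ->; rewrite derivC horner0.
have [m hm] := neighpr_wit xw p0.
have m_in : m \in `]x, w].
  move: hm (next_root_in p x w); rewrite /neighpr !in_itv /= (max_idPl (ltW xw)).
  by move=> /andP[-> mr] /andP[_ rw]; exact: le_trans (ltW mr) rw.
rewrite (polyrN0_itv nr m_in (_ : w \in _)); last by rewrite in_itv /= xw lexx.
by rewrite (sgr_neighpr hm) (sgp_right_deriv px) sgp_rightNroot.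
Qed.

Lemma sgr_left_of_simple_root p x w : w < x -> root p x -> p^`().[x] != 0 ->
  {in `[w, x[, noroot p} -> Num.sg p.[w] = - Num.sg p^`().[x].
Proof.
move=> wx px p'x nr.
have p0 : p != 0 by apply: contraNneq p'x => ->; rewrite derivC horner0.
have [m hm] := neighpl_wit wx p0.
have m_in : m \in `[w, x[.
  move: hm (prev_root_in p w x); rewrite /neighpl !in_itv /= (min_idPl (ltW wx)).
  by move=> /andP[lm ->] /andP[wl _]; rewrite andbT; exact: le_trans wl (ltW lm).
rewrite (polyrN0_itv nr m_in (_ : w \in _)); last by rewrite in_itv /= wx lexx.
have mu1 : \mu_x p = 1%N.
  have := mu_deriv px; rewrite muNroot //.
  by have := px; rewrite -mu_gt0 //; case: (\mu_x p) => [|[|]].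
by rewrite (sgr_neighpl hm) mu1 expr1 mulN1r (sgp_right_deriv px) sgp_rightNroot.
Qed.

Lemma sgr_deriv_consecutive_roots p x y : x < y -> root p x -> root p y ->
  p^`().[x] != 0 -> p^`().[y] != 0 -> {in `]x, y[, noroot p} ->
  Num.sg p^`().[y] = - Num.sg p^`().[x].
Proof.
move=> xy px py p'x p'y nr; pose m := (x + y) / 2.
have xm : x < m by rewrite /m; lra.
have my : m < y by rewrite /m; lra.
have nr_right : {in `]x, m], noroot p}.
  by move=> z; rewrite in_itv /= => /andP[xz zm]; apply: nr; rewrite in_itv /= xz (le_lt_trans zm).
have nr_left : {in `[m, y[, noroot p}.
  by move=> z; rewrite in_itv /= => /andP[mz zy]; apply: nr; rewrite in_itv /= zy (lt_le_trans xm).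
have := sgr_left_of_simple_root my py p'y nr_left.
by rewrite (sgr_right_of_simple_root xm px p'x nr_right) => ->; rewrite opprK.
Qed.

End SimpleRootSigns.

Definition wronskian (R : nzRingType) (p q : {poly R}) : {poly R} :=
  p * q^`() - p^`() * q.

Lemma wronskian_Xn_neq0 (R : numDomainType) (q : {poly R}) k :
  (0 < k)%N -> q != 0 -> (size q <= k)%N -> wronskian q 'X^k != 0.
Proof.
move=> k0 q0 sq; set d := (size q).-1.
have dk : (d < k)%N by rewrite /d; move: (size_poly_gt0 q); rewrite q0; lia.
have lcq : q`_d = lead_coef q by [].
apply/eqP => /(congr1 (coefp (k.-1 + d))) /=.
rewrite coef0 coefB derivXn mulrnAr coefMn !coefMXn ltnNge leq_addr /= addKn lcq.
case: (ltnP (k.-1 + d) k) => hd.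
  rewrite subr0 => /eqP; rewrite mulrn_eq0 lead_coef_eq0 (negPf q0); lia.
have -> : (k.-1 + d - k = d.-1)%N by lia.
rewrite coef_deriv prednK ?lcq; last lia.
by move/eqP; rewrite -mulrnBr ?(ltnW dk) // mulrn_eq0 lead_coef_eq0 (negPf q0); lia.
Qed.

Definition between (R : numDomainType) (x y z : R) := (x <= z <= y) || (y <= z <= x).

Section Pencil.
Variable R : rcfType.
Variables (a q : {poly R}) (alpha : R).
Hypothesis q_neq0 : q != 0.
Hypothesis size_q_lt : (size q < size a)%N.
Hypothesis coprime_roots : forall z, root q z -> ~~ root a z.
Hypothesis wronskian_neq0 : wronskian q a != 0.

Definition pencil (t : R) := a + t *: q.

Hypothesis multiple_root_le :
  forall t z, root (pencil t) z -> root (pencil t)^`() z -> t <= alpha.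

Let crit := wronskian q a * q.
Let crit_free x y := forall z, between x y z -> ~~ root crit z.

Lemma size_pencil t : size (pencil t) = size a.
Proof. by rewrite size_polyDl // (leq_ltn_trans (size_scale_leq _ _)). Qed.

Lemma lead_coef_pencil t : lead_coef (pencil t) = lead_coef a.
Proof. by rewrite lead_coefDl // (leq_ltn_trans (size_scale_leq _ _)). Qed.

Lemma pencil_neq0 t : pencil t != 0.
Proof. by rewrite -size_poly_eq0 size_pencil -lt0n (leq_ltn_trans _ size_q_lt). Qed.

Lemma pencil_shift t t' : pencil t' = pencil t + (t' - t) *: q.
Proof. by rewrite /pencil scalerBl -addrA [t *: q + _]addrC subrK. Qed.

Lemma horner_wronskian_pencil_root t z : root (pencil t) z ->
  (wronskian q a).[z] = q.[z] * (pencil t)^`().[z].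
Proof.
move=> /rootP pz.
have -> : wronskian q a = wronskian q (pencil t).
  by rewrite /wronskian /pencil derivD derivZ -!mul_polyC; ring.
by rewrite /wronskian hornerD hornerN !hornerM pz mulr0 subr0.
Qed.

Lemma pencil_simple_root t z : alpha < t -> root (pencil t) z ->
  (pencil t)^`().[z] != 0.
Proof. by move=> ht pz; apply: contraTN ht => p'z; rewrite -leNgt (multiple_root_le pz). Qed.

(* A zero [z] of the Wronskian with [q.[z] != 0] is a double root of
   [pencil (- a.[z] / q.[z])], so [- a.[z] / q.[z] <= alpha]. *)
Lemma sgr_pencil_root_crit t t' z : alpha < t -> alpha < t' -> root crit z ->
  (pencil t).[z] != 0 /\ Num.sg (pencil t').[z] = Num.sg (pencil t).[z].
Proof.
move=> ht ht' cz.
pose sigma := if q.[z] == 0 then Num.sg a.[z] else Num.sg q.[z].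
suff sg_pencil u : alpha < u -> Num.sg (pencil u).[z] = sigma.
  split; last by rewrite !sg_pencil.
  rewrite -sgr_eq0 sg_pencil // /sigma.
  by case: ifP => [/eqP qz|/negbT]; rewrite sgr_eq0 //; apply: coprime_roots; rewrite rootE qz.
move=> hu; rewrite /sigma hornerD hornerZ.
have [qz|qz] := eqVneq q.[z] 0; first by rewrite qz mulr0 addr0.
pose ts := - a.[z] / q.[z].
have pts : root (pencil ts) z by apply/rootP; rewrite hornerD hornerZ /ts; field.
have p'ts : root (pencil ts)^`() z.
  move: cz; rewrite rootE hornerM mulf_eq0 (negPf qz) orbF.
  by rewrite (horner_wronskian_pencil_root pts) mulf_eq0 (negPf qz).
have -> : a.[z] + u * q.[z] = (u - ts) * q.[z] by rewrite /ts; field.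
by rewrite sgrM gtr0_sg ?mul1r // subr_gt0 (le_lt_trans (multiple_root_le pts p'ts)).
Qed.

Lemma crit_between_roots t x1 x2 : alpha < t -> x1 < x2 ->
  root (pencil t) x1 -> root (pencil t) x2 -> ~ {in `[x1, x2], noroot crit}.
Proof.
move=> ht x12 p1 p2 nc; set g := pencil t.
have [y [/andP[x1y yx2] py nry]] :
    exists y, [/\ x1 < y <= x2, root g y & {in `]x1, y[, noroot g}].
  case: (next_rootP g x1 x2) => [g0|y _ /rootP gy|c _ _ nr].
  - by move: (pencil_neq0 t); rewrite -/g g0 eqxx.
  - by rewrite in_itv /= => /andP[x1y yx2] nr; exists y; rewrite x1y ltW.
  - by exists x2; rewrite x12 lexx.
have nq : {in `[x1, x2], noroot q}.
  by move=> z z_in; apply: contra (nc z z_in); rewrite rootM orbC => ->.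
have in12 z : x1 <= z <= y -> z \in `[x1, x2].
  by rewrite in_itv /= => /andP[-> zy]; rewrite (le_trans zy yx2).
have q1 : q.[x1] != 0 by apply: nq; rewrite in12 // lexx ltW.
have sg_qy : Num.sg q.[y] = Num.sg q.[x1] by apply: (polyrN0_itv nq); rewrite in12 ?lexx ?ltW.
have g'1 := pencil_simple_root ht p1.
have sg_g'y := sgr_deriv_consecutive_roots x1y p1 py g'1 (pencil_simple_root ht py) nry.
have : (wronskian q a).[x1] * (wronskian q a).[y] <= 0.
  rewrite -sgr_le0 sgrM !(horner_wronskian_pencil_root (t := t)) // !sgrM sg_qy sg_g'y.
  by rewrite !mulrN mulrACA -!expr2 !sqr_sg q1 g'1 mulr1 oppr_le0 ler01.
move=> /(polyrcf.poly_ivt (ltW x1y)) [z z_in wz].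
by have := nc z (in12 z z_in); rewrite rootM wz.
Qed.

Lemma pencil_sg_stable_right t t' x : alpha < t -> alpha < t' -> exists w,
  [/\ x < w, {in `]x, w[, noroot crit}, (pencil t).[w] != 0 &
      Num.sg (pencil t').[w] = Num.sg (pencil t).[w]].
Proof.
move=> ht ht'.
have crit_neq0 : crit != 0 by rewrite mulf_neq0.
pose B := 1 + `|x| + cauchy_bound crit + cauchy_bound (pencil t) + cauchy_bound (pencil t').
have [[c_ge0 ct_ge0] ct'_ge0] :=
  (cauchy_bound_ge0 crit, cauchy_bound_ge0 (pencil t), cauchy_bound_ge0 (pencil t')).
have [x_le x_norm_ge0] := (ler_norm x, normr_ge0 x).
case: (next_rootP crit x B) => [c0|y _ /rootP cy y_in nr|_ _ _ nr].
- by rewrite c0 eqxx in crit_neq0.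
- have [py sg_y] := sgr_pencil_root_crit ht ht' cy.
  by exists y; split=> //; move: y_in; rewrite in_itv => /andP[].
- have sg_B u : cauchy_bound (pencil u) <= B ->
      Num.sg (pencil u).[B] = Num.sg (lead_coef a).
    move=> hu; rewrite (sgp_pinftyP (ge_cauchy_bound (pencil_neq0 u))) /sgp_pinfty.
      by rewrite lead_coef_pencil.
    by rewrite in_itv /= andbT.
  have [sg_t sg_t'] : Num.sg (pencil t).[B] = Num.sg (lead_coef a) /\
      Num.sg (pencil t').[B] = Num.sg (lead_coef a) by split; apply: sg_B; rewrite /B; lra.
  exists B; split=> //; rewrite ?sg_t ?sg_t' //; first by rewrite /B; lra.
  rewrite -sgr_eq0 sg_t sgr_eq0 lead_coef_eq0.
  by rewrite -size_poly_eq0 -lt0n (leq_ltn_trans _ size_q_lt).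
Qed.

Lemma pencil_sg_stable_left t t' x : alpha < t -> alpha < t' -> exists w,
  [/\ w < x, {in `]w, x[, noroot crit}, (pencil t).[w] != 0 &
      Num.sg (pencil t').[w] = Num.sg (pencil t).[w]].
Proof.
move=> ht ht'.
have crit_neq0 : crit != 0 by rewrite mulf_neq0.
pose B := 1 + `|x| + cauchy_bound crit + cauchy_bound (pencil t) + cauchy_bound (pencil t').
have [[c_ge0 ct_ge0] ct'_ge0] :=
  (cauchy_bound_ge0 crit, cauchy_bound_ge0 (pencil t), cauchy_bound_ge0 (pencil t')).
have x_norm_ge0 := normr_ge0 x.
have x_le : - x <= `|x| by rewrite -normrN ler_norm.
case: (prev_rootP crit (- B) x) => [c0|y _ /rootP cy y_in nr|_ _ _ nr].
- by rewrite c0 eqxx in crit_neq0.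
- have [py sg_y] := sgr_pencil_root_crit ht ht' cy.
  by exists y; split=> //; move: y_in; rewrite in_itv => /andP[].
- have sg_B u : cauchy_bound (pencil u) <= B ->
      Num.sg (pencil u).[- B] = Num.sg ((-1) ^+ (size a).-1 * lead_coef a).
    move=> hu; rewrite (sgp_minftyP (le_cauchy_bound (pencil_neq0 u))) /sgp_minfty.
      by rewrite size_pencil lead_coef_pencil.
    by rewrite in_itv /= lerN2.
  have [sg_t sg_t'] : Num.sg (pencil t).[- B] = Num.sg ((-1) ^+ (size a).-1 * lead_coef a) /\
      Num.sg (pencil t').[- B] = Num.sg ((-1) ^+ (size a).-1 * lead_coef a).
    by split; apply: sg_B; rewrite /B; lra.
  exists (- B); split=> //; rewrite ?sg_t ?sg_t' //; first by rewrite /B; lra.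
  rewrite -sgr_eq0 sg_t sgr_eq0 mulf_eq0 signr_eq0 lead_coef_eq0.
  by rewrite -size_poly_eq0 -lt0n (leq_ltn_trans _ size_q_lt).
Qed.

Lemma pencil_root_follow_right t t' x : alpha < t -> alpha < t' ->
  root (pencil t) x -> ~~ root crit x ->
  (pencil t').[x] * (pencil t)^`().[x] < 0 ->
  exists2 y, root (pencil t') y & crit_free x y.
Proof.
move=> ht ht' px cx neg.
have [w [xw ncw gw sg_w]] := pencil_sg_stable_right x ht ht'.
have nc z : x <= z < w -> ~~ root crit z.
  case/andP; rewrite le_eqVlt => /predU1P[<- //|xz zw].
  by apply: ncw; rewrite in_itv /= xz.
have ng : {in `]x, w], noroot (pencil t)}.
  move=> z; rewrite in_itv /= => /andP[xz]; rewrite le_eqVlt => /predU1P[-> //|zw].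
  apply/negP => pz; apply: (crit_between_roots ht xz px pz) => u.
  by rewrite in_itv /= => /andP[xu uz]; apply: nc; rewrite xu (le_lt_trans uz zw).
have sg_gw := sgr_right_of_simple_root xw px (pencil_simple_root ht px) ng.
have : (pencil t').[x] * (pencil t').[w] <= 0.
  by rewrite -sgr_le0 sgrM sg_w sg_gw -sgrM sgr_le0 ltW.
move=> /(polyrcf.poly_ivt (ltW xw)) [y]; rewrite in_itv /= => /andP[xy yw] py.
have {}yw : y < w.
  by rewrite lt_neqAle yw andbT; apply: contraTneq py => ->; rewrite rootE -sgr_eq0 sg_w sgr_eq0.
by exists y => // z /orP[] /andP[? ?]; apply: nc; apply/andP; split; lra.
Qed.

Lemma pencil_root_follow_left t t' x : alpha < t -> alpha < t' ->
  root (pencil t) x -> ~~ root crit x ->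
  0 < (pencil t').[x] * (pencil t)^`().[x] ->
  exists2 y, root (pencil t') y & crit_free x y.
Proof.
move=> ht ht' px cx pos.
have [w [wx ncw gw sg_w]] := pencil_sg_stable_left x ht ht'.
have nc z : w < z <= x -> ~~ root crit z.
  case/andP=> wz; rewrite le_eqVlt => /predU1P[-> //|zx].
  by apply: ncw; rewrite in_itv /= wz.
have ng : {in `[w, x[, noroot (pencil t)}.
  move=> z; rewrite in_itv /= => /andP[]; rewrite le_eqVlt => /predU1P[<- //|wz] zx.
  apply/negP => pz; apply: (crit_between_roots ht zx pz px) => u.
  by rewrite in_itv /= => /andP[zu ux]; apply: nc; rewrite ux (lt_le_trans wz zu).
have sg_gw := sgr_left_of_simple_root wx px (pencil_simple_root ht px) ng.
have : (pencil t').[w] * (pencil t').[x] <= 0.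
  rewrite -sgr_le0 sgrM sg_w sg_gw mulNr -sgrM mulrC sgrM -sgrM oppr_le0 sgr_ge0 ltW //.
move=> /(polyrcf.poly_ivt (ltW wx)) [y]; rewrite in_itv /= => /andP[wy yx] py.
have {}wy : w < y.
  by rewrite lt_neqAle wy andbT; apply: contraTneq py => <-; rewrite rootE -sgr_eq0 sg_w sgr_eq0.
by exists y => // z /orP[] /andP[? ?]; apply: nc; apply/andP; split; lra.
Qed.

Lemma pencil_root_follow t t' x : alpha < t -> alpha < t' -> root (pencil t) x ->
  exists2 y, root (pencil t') y & crit_free x y.
Proof.
move=> ht ht' px.
have qx : q.[x] != 0.
  apply: contraTneq px => qx0; rewrite rootE hornerD hornerZ qx0 mulr0 addr0.
  by apply: coprime_roots; rewrite rootE qx0.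
have g'x := pencil_simple_root ht px.
have cx : ~~ root crit x.
  by rewrite rootM negb_or !rootE (horner_wronskian_pencil_root px) mulf_neq0.
have [->|tt'] := eqVneq t' t.
  by exists x => // z /orP[] /andP[? ?]; have -> : z = x by apply/eqP; rewrite eq_le; apply/andP.
have hx : (pencil t').[x] != 0.
  by rewrite (pencil_shift t) hornerD (rootP px) add0r hornerZ mulf_neq0 ?subr_eq0.
case: ltgtP (mulf_neq0 hx g'x) => // [neg|pos] _.
- exact: pencil_root_follow_right ht ht' px cx neg.
- exact: pencil_root_follow_left ht ht' px cx pos.
Qed.

Lemma crit_free_inj t x1 x2 y : alpha < t -> root (pencil t) x1 -> root (pencil t) x2 ->
  crit_free x1 y -> crit_free x2 y -> x1 = x2.
Proof.
move=> ht p1 p2 f1 f2.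
have ordered u v : root (pencil t) u -> root (pencil t) v ->
    crit_free u y -> crit_free v y -> ~ u < v.
  move=> pu pv fu fv uv; apply: (crit_between_roots ht uv pu pv) => z.
  rewrite in_itv /= => /andP[uz zv]; case: (lerP z y) => zy.
  - by apply: fu; rewrite /between uz zy.
  - by apply: fv; rewrite /between (ltW zy) zv orbT.
by case: (ltgtP x1 x2) => // [lt12|lt21]; [case: (ordered x1 x2) | case: (ordered x2 x1)].
Qed.

Lemma pencil_num_real_roots_le t t' k k' : alpha < t -> alpha < t' ->
  num_real_roots_eq (pencil t) k -> num_real_roots_eq (pencil t') k' -> (k <= k')%N.
Proof.
move=> ht ht' [r [ur er <-]] [r' [ur' er' <-]].
apply: (leq_size_rel (rel := crit_free)) => // [x|x1 x2 y]; rewrite -?er.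
- by move=> px; have [y py fy] := pencil_root_follow ht ht' px; exists y; rewrite -?er'.
- by move=> p1 p2; apply: crit_free_inj ht p1 p2.
Qed.

Lemma pencil_num_real_roots t t' k k' : alpha < t -> alpha < t' ->
  num_real_roots_eq (pencil t) k -> num_real_roots_eq (pencil t') k' -> k = k'.
Proof.
move=> ht ht' hk hk'; apply/eqP; rewrite eqn_leq.
by rewrite (pencil_num_real_roots_le ht ht' hk hk') (pencil_num_real_roots_le ht' ht hk' hk).
Qed.

End Pencil.

Lemma root_deriv_Xn (R : rcfType) n : (1 < n)%N -> root ('X^n : {poly R})^`() 0.
Proof.
move=> n1; rewrite derivXn rootE hornerMn hornerXn expr0n.
by case: n n1 => [|[|n]] //= _; rewrite mul0rn.
Qed.

Lemma mulXn_pencil_num_real_roots (R : rcfType) m k (q : {poly R}) alpha t t' N :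
  (0 < k)%N -> ~~ root q 0 -> (size q <= k)%N -> 0 <= alpha ->
  (forall u z, root ('X^m * pencil 'X^k q u) z ->
     root ('X^m * pencil 'X^k q u)^`() z -> u <= alpha) ->
  alpha < t -> alpha < t' ->
  num_real_roots_eq ('X^m * pencil 'X^k q t) N ->
  num_real_roots_eq ('X^m * pencil 'X^k q t') N.
Proof.
move=> k_gt0 q0 size_q alpha_ge0 mult ht ht' hN; set G := pencil 'X^k q.
have q_neq0 : q != 0 by apply: contraNneq q0 => ->; rewrite root0.
have size_lt : (size q < size ('X^k : {poly R}))%N by rewrite size_polyXn.
have coprime z : root q z -> ~~ root 'X^k z.
  by rewrite root_Xn //; apply: contraTN => /eqP ->.
have mult_G u z : root (G u) z -> root (G u)^`() z -> u <= alpha.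
  move=> /rootP Gz /rootP G'z; apply: (mult u z); rewrite ?derivM rootE.
    by rewrite hornerM Gz mulr0.
  by rewrite hornerD !hornerM Gz G'z !mulr0 addr0.
have hG u : alpha < u ->
    num_real_roots_eq ('X^m * G u) ((0 < m) + size (rootsR (G u))).
  move=> hu; apply: num_real_roots_eq_mulXn; last exact/num_real_roots_eq_rootsR/pencil_neq0.
  rewrite rootE hornerD hornerXn expr0n (gtn_eqF k_gt0) add0r hornerZ.
  by rewrite mulf_neq0 // gt_eqF // (le_lt_trans alpha_ge0 hu).
rewrite (num_real_roots_eq_inj hN (hG t ht)).
rewrite (pencil_num_real_roots q_neq0 size_lt coprime (wronskian_Xn_neq0 k_gt0 q_neq0 size_q)
  mult_G ht ht' (num_real_roots_eq_rootsR (pencil_neq0 size_lt t))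
  (num_real_roots_eq_rootsR (pencil_neq0 size_lt t'))).
exact: hG.
Qed.

Lemma Xn_add_scale_num_real_roots (R : rcfType) n (q : {poly R}) alpha t t' k :
  (1 < n)%N -> (size q <= n)%N ->
  (forall u z, root ('X^n + u *: q) z -> root ('X^n + u *: q)^`() z -> u <= alpha) ->
  alpha < t -> alpha < t' ->
  num_real_roots_eq ('X^n + t *: q) k -> num_real_roots_eq ('X^n + t' *: q) k.
Proof.
move=> n1 size_q mult ht ht'.
have degenerate_le u : 'X^n + u *: q = 'X^n -> u <= alpha.
  move=> e; apply: (mult u 0); rewrite e; last exact: root_deriv_Xn.
  by rewrite root_Xn ?eqxx //; lia.
have alpha_ge0 : 0 <= alpha by apply: degenerate_le; rewrite scale0r addr0.
have q_neq0 : q != 0.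
  apply/eqP => q0; have := degenerate_le (alpha + 1).
  by rewrite q0 scaler0 addr0 => /(_ erefl); lra.
have [m [q1 q10 qE]] := multiplicity_XsubC q 0.
rewrite q_neq0 /= in q10; rewrite subr0 in qE.
have q1_neq0 : q1 != 0 by apply: contraNneq q10 => ->; rewrite root0.
have size_q1 : (size q1 <= n - m)%N.
  move: size_q; rewrite qE size_mulXn // => h.
  by rewrite leq_subRL // (leq_trans _ h) // leq_addr.
have nm_gt0 : (0 < n - m)%N by rewrite (leq_trans _ size_q1) // size_poly_gt0.
have fE u : 'X^n + u *: q = 'X^m * pencil 'X^(n - m) q1 u.
  have le_mn : (m <= n)%N by rewrite ltnW // -subn_gt0.
  by rewrite /pencil mulrDr -exprD subnKC // -scalerAr qE [q1 * _]mulrC.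
rewrite !fE; apply: (mulXn_pencil_num_real_roots (alpha := alpha)) => // u z.
by rewrite -fE; apply: mult.
Qed.

Section Bezoutian.
Variable A : idomainType.
Implicit Types f g : {poly A}.

Lemma horner_map_polyC_X (p : {poly A}) : (map_poly polyC p).['X] = p.
Proof.
elim/poly_ind: p => [|p c IH]; first by rewrite map_poly0 horner0.
by rewrite rmorphD rmorphM /= map_polyX map_polyC hornerD hornerMX hornerC IH.
Qed.

Lemma bezout_polyE f g :
  bezout_poly f g * ('X - ('X)%:P) = g *: map_poly polyC f - f *: map_poly polyC g.
Proof.
have -> : g *: map_poly polyC f - f *: map_poly polyC g =
    map_poly polyC f * g%:P - f%:P * map_poly polyC g.
  by rewrite -!mul_polyC mulrC.
have : root (map_poly polyC f * g%:P - f%:P * map_poly polyC g) 'X.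
  by rewrite rootE hornerD hornerN !hornerM !hornerC !horner_map_polyC_X mulrC subrr.
rewrite /bezout_poly; case/factor_theorem => B ->.
by rewrite Pdiv.IdomainMonic.mulpK ?monicXsubC.
Qed.

End Bezoutian.

Lemma map_bezout_poly (A B : idomainType) (phi : {rmorphism A -> B}) (f g : {poly A}) :
  map_poly (map_poly phi) (bezout_poly f g) =
  bezout_poly (map_poly phi f) (map_poly phi g).
Proof.
have mapC h : map_poly (map_poly phi) (map_poly polyC h) = map_poly polyC (map_poly phi h).
  by rewrite -!map_poly_comp; apply: eq_map_poly => c /=; rewrite map_polyC.
apply: (mulIf (negbT (polyXsubC_eq0 ('X : {poly B})))).
rewrite bezout_polyE -(map_polyX phi) -map_polyXsubC -rmorphM bezout_polyE.
by rewrite rmorphB /= !map_polyZ !mapC.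
Qed.

Lemma map_bezout_mx (A B : idomainType) (phi : {rmorphism A -> B}) n (f g : {poly A}) :
  map_mx phi (bezout_mx n f g) = bezout_mx n (map_poly phi f) (map_poly phi g).
Proof. by apply/matrixP => i j; rewrite !mxE -map_bezout_poly !coef_map. Qed.

(* A common root [z] makes [(z^(n-1), ..., z, 1)] a left kernel vector of the
   Bezoutian, because [bezout_poly f g] vanishes at [x = z]. *)
Lemma det_bezout_mx_common_root (F : fieldType) n (f g : {poly F}) z :
  (0 < n)%N -> (size f <= n.+1)%N -> (size g <= n.+1)%N -> root f z -> root g z ->
  \det (bezout_mx n f g) = 0.
Proof.
move=> n_gt0 size_f size_g /rootP fz /rootP gz; set B := bezout_poly f g.
have Bz : B.[z%:P] = 0.
  have := congr1 (horner^~ z%:P) (bezout_polyE f g).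
  rewrite hornerM hornerXsubC !(hornerD, hornerN, hornerZ) !horner_map fz gz !mulr0 subrr.
  move/eqP; rewrite mulf_eq0 -opprB oppr_eq0 polyXsubC_eq0 orbF.
  by move/eqP.
have size_B : (size B <= n)%N.
  have [->|B_neq0] := eqVneq B 0; first by rewrite size_poly0.
  have size_rhs : (size (g *: map_poly polyC f - f *: map_poly polyC g)%R <= n.+1)%N.
    rewrite (leq_trans (size_polyD _ _)) // size_polyN geq_max.
    by rewrite !(leq_trans (size_scale_leq _ _)) ?size_map_polyC.
  rewrite -ltnS; apply: leq_trans size_rhs.
  by rewrite -bezout_polyE size_Mmonic ?monicXsubC // size_XsubC addn2.
apply/eqP/det0P; exists (\row_(i < n) z ^+ (n - i.+1)).
  have last_lt : (n.-1 < n)%N by rewrite prednK.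
  apply/eqP => /rowP /(_ (Ordinal last_lt)); rewrite !mxE /= prednK // subnn expr0.
  by move/eqP; rewrite oner_eq0.
apply/rowP => j; rewrite !mxE.
transitivity ((B.[z%:P])`_(n - j.+1)); last by rewrite Bz coef0.
rewrite (horner_coef_wide _ size_B) coef_sum (reindex_inj rev_ord_inj) /=.
apply: eq_bigr => i _; rewrite !mxE -rmorphXn coefMC mulrC.
by have -> : (n - (n - i.+1).+1)%N = i by have := ltn_ord i; lia.
Qed.

Lemma size_sum_scale_Xn (R : nzRingType) s (c : 'I_s -> R) :
  (size (\sum_(k < s) c k *: 'X^k)%R <= s)%N.
Proof.
apply: (big_ind (fun p : {poly R} => size p <= s)%N) => [|p p' sp sp'|k _].
- by rewrite size_poly0.
- by rewrite (leq_trans (size_polyD _ _)) // geq_max sp sp'.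
- by rewrite (leq_trans (size_scale_leq _ _)) // size_polyXn.
Qed.

Lemma fv_atE (R : rcfType) n s (v : 'I_s.+1 -> R) xi :
  fv_at n v xi = 'X^n + xi *: \sum_(k < s.+1) v k *: 'X^k.
Proof.
have -> : fv_at n v xi = map_poly (horner_eval xi) (fv n v) by [].
rewrite rmorphD rmorph_sum /=.
rewrite rmorphXn /= map_polyX scaler_sumr; congr (_ + _); apply: eq_bigr => k _.
rewrite rmorphM rmorphXn /= map_polyX map_polyC /= /horner_eval hornerM hornerC hornerX.
by rewrite scalerA mul_polyC mulrC.
Qed.

Lemma root_Pv_multiple_root (R : rcfType) n s (v : 'I_s.+1 -> R) xi z : (s < n)%N ->
  root (fv_at n v xi) z -> root (fv_at n v xi)^`() z -> root (Pv n v) xi.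
Proof.
move=> sn fz f'z.
have size_f : (size (fv_at n v xi) <= n.+1)%N.
  rewrite fv_atE (leq_trans (size_polyD _ _)) // geq_max size_polyXn leqnn.
  by rewrite (leq_trans (size_scale_leq _ _)) // (leq_trans (size_sum_scale_Xn _)) // ltnW.
have size_f' : (size (fv_at n v xi)^`() <= n.+1)%N.
  by rewrite size_deriv (leq_trans (leq_pred _) size_f).
rewrite /Pv rootE -[_.[xi]]/(horner_eval xi _) -det_map_mx map_bezout_mx -deriv_map.
by apply/eqP/(det_bezout_mx_common_root _ size_f size_f' fz f'z); rewrite (leq_ltn_trans _ sn).
Qed.

Theorem lemma5p5 (R : rcfType) (n s : nat) (v : 'I_s.+1 -> R)
  (hs : (1 <= s)%N) (hsn : (s < n)%N)
  (hP : Pv n v != 0)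
  (alpha : R) (halpha : root (Pv n v) alpha)
  (halpha_max : forall beta : R, root (Pv n v) beta -> beta <= alpha)
  (gamma0 : nat) (rho0 : R) (hrho0 : alpha < rho0)
  (hgamma : forall xi : R, rho0 < xi -> num_real_roots_eq (fv_at n v xi) gamma0) :
  forall xi : R, alpha < xi -> num_real_roots_eq (fv_at n v xi) gamma0.
Proof.
move=> xi hxi; set xi0 := Num.max rho0 xi + 1.
have rho0_lt : rho0 < xi0 by rewrite /xi0 ltr_pwDr // le_max lexx.
rewrite fv_atE; apply: (Xn_add_scale_num_real_roots (alpha := alpha) (t := xi0)) => //.
- by rewrite (leq_ltn_trans hs).
- exact: leq_trans (size_sum_scale_Xn _) hsn.
- move=> u z fz f'z; apply/halpha_max/(root_Pv_multiple_root (z := z) hsn);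
    by rewrite fv_atE.
- exact: lt_trans rho0_lt.
- by rewrite -fv_atE; apply: hgamma.
Qed.
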